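(* Every hyperbola $\mathcal H$ in the plane is the projection to the $xy$-plane of the intersection of two HR-cones. Moreover, the set of all pairs of HR-cones whose intersection projects onto $\mathcal H$ is faithfully parameterized by (i.e. in bijective correspondence with the points of) a semialgebraic surface in $\mathbb{R}^4$.
   Context: An HR-cone $(A,{\bf a})$, for $A$ a real symmetric positive definite $2\times2$ matrix with $\det A=1$ and ${\bf a}\in\mathbb{R}^2$, is the set $\{(x,y,z)\in\mathbb{R}^3: z^2=({\bf x}-{\bf a})^TA({\bf x}-{\bf a}),\ {\bf x}=(x,y)^T\}$; distinct pairs $(A,{\bf a})$ give distinct cones.
   Formalization: The parameterizing set is a semialgebraic subset of R⁴ of dimension 3 rather than a surface, the pairs of HR-cones are ordered, and the bijection onto it has semialgebraic graph. Apart from conventions, each condition added here is assumed in the paper as well or is needed for the statement above to hold. *)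

From HB Require Import structures.
From mathcomp Require Import all_boot all_order all_algebra.
From mathcomp Require Import reals.
Set Implicit Arguments. Unset Strict Implicit. Unset Printing Implicit Defensive.
Import Order.TTheory GRing.Theory Num.Theory.
Local Open Scope ring_scope.

Section Defs.
Variable R : realType.

Inductive pexpr (n : nat) : Type :=
| PVar of 'I_n
| PConst of R
| POpp of pexpr n
| PAdd of pexpr n & pexpr n
| PMul of pexpr n & pexpr n.

Fixpoint peval (n : nat) (p : pexpr n) (x : 'I_n -> R) : R :=
  match p with
  | PVar i => x i
  | PConst c => c
  | POpp p => - peval p x
  | PAdd p q => peval p x + peval q x
  | PMul p q => peval p x * peval q x
  end.

Inductive sformula (n : nat) : Type :=
| SPos of pexpr n
| SZero of pexpr n
| SNot of sformula n
| SAnd of sformula n & sformula n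
| SOr of sformula n & sformula n.

Fixpoint sholds (n : nat) (F : sformula n) (x : 'I_n -> R) : Prop :=
  match F with
  | SPos p => 0 < peval p x
  | SZero p => peval p x = 0
  | SNot F => ~ sholds F x
  | SAnd F G => sholds F x /\ sholds G x
  | SOr F G => sholds F x \/ sholds G x
  end.

Definition semialgebraic (n : nat) (S : ('I_n -> R) -> Prop) : Prop :=
  exists F : sformula n, forall x, S x <-> sholds F x.

Definition has_interior (d : nat) (T : ('I_d -> R) -> Prop) : Prop :=
  exists (y0 : 'I_d -> R) (e : R), 0 < e /\
    forall y : 'I_d -> R, (forall j, `|y j - y0 j| < e) -> T y.

Definition coord_proj (n d : nat) (f : 'I_d -> 'I_n)
  (S : ('I_n -> R) -> Prop) : ('I_d -> R) -> Prop :=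
  fun y => exists x, S x /\ forall j, y j = x (f j).

Definition sa_dim (n : nat) (S : ('I_n -> R) -> Prop) (d : nat) : Prop :=
  (exists f : 'I_d -> 'I_n, injective f /\ has_interior (coord_proj f S)) /\
  (forall f : 'I_d.+1 -> 'I_n, injective f -> ~ has_interior (coord_proj f S)).

(* H is a (non-degenerate) hyperbola: zero set of
   a x^2 + b xy + c y^2 + d x + e y + f with b^2 - 4ac > 0 and nonzero
   determinant of the 3x3 symmetric matrix of the conic. *)
Definition hyperbola (H : R * R -> Prop) : Prop :=
  exists a b c d e f : R,
    b ^+ 2 - 4 * a * c > 0 /\
    \det (\matrix_(i < 3, j < 3)
            (nth 0 (nth [::] [:: [:: a; b / 2; d / 2]; [:: b / 2; c; e / 2];
                              [:: d / 2; e / 2; f]] i) j))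
      != 0 /\
    forall p : R * R,
      H p <-> a * p.1 ^+ 2 + b * p.1 * p.2 + c * p.2 ^+ 2 + d * p.1 + e * p.2 + f = 0.

Definition vec2 (x y : R) : 'cV[R]_2 := \col_(i < 2) [:: x; y]`_i.

Definition HRparam (A : 'M[R]_2) (a : 'cV[R]_2) : Prop :=
  A^T = A /\
  (forall v : 'cV[R]_2, v != 0 -> 0 < (v^T *m A *m v) 0 0) /\
  \det A = 1.

Definition HRcone (A : 'M[R]_2) (a : 'cV[R]_2) (p : R * R * R) : Prop :=
  let: (x, y, z) := p in
  let w := vec2 x y - a in
  z ^+ 2 = (w^T *m A *m w) 0 0.

Definition cone_param := ('M[R]_2 * 'cV[R]_2)%type.

Definition proj_inter (C1 C2 : cone_param) (q : R * R) : Prop :=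
  exists z : R, HRcone C1.1 C1.2 (q.1, q.2, z) /\ HRcone C2.1 C2.2 (q.1, q.2, z).

Definition cone_pairs_over (H : R * R -> Prop) (P : cone_param * cone_param) : Prop :=
  HRparam P.1.1 P.1.2 /\ HRparam P.2.1 P.2.2 /\
  forall q, proj_inter P.1 P.2 q <-> H q.

Definition encode_pair (P : cone_param * cone_param) : 'I_10 -> R :=
  fun i => [:: P.1.1 0 0; P.1.1 0 1; P.1.1 1 1; P.1.2 0 0; P.1.2 1 0;
               P.2.1 0 0; P.2.1 0 1; P.2.1 1 1; P.2.2 0 0; P.2.2 1 0]`_i.

Definition restricted_graph (D : cone_param * cone_param -> Prop)
  (Phi : cone_param * cone_param -> 'I_4 -> R) : ('I_14 -> R) -> Prop :=
  fun w => exists P, D P /\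
    forall i : 'I_14,
      w i = if (i < 10)%N then encode_pair P (inord i) else Phi P (inord (i - 10)).

End Defs.

From HB Require Import structures.
From mathcomp Require Import all_boot all_order all_algebra.
From mathcomp Require Import reals ring lra.
Import Order.TTheory GRing.Theory Num.Theory.
Set Implicit Arguments. Unset Strict Implicit. Unset Printing Implicit Defensive.
Local Open Scope ring_scope.

(* A point (x, y) lies in the projection of the intersection of the HR-cones (A, a)
   and (B, b) iff Q_A(x - a) = Q_B(x - b), both quadratic forms being nonnegative.  A
   non-degenerate hyperbola determines its equation q up to a nonzero factor (the lines
   through its centre c in an open cone of directions meet it in two symmetric points, which
   gives polynomial identities on an open set), so the pairs over H = {q = 0} are those with
   Q_A(x - a) - Q_B(x - b) = l q, l != 0.  Comparing coefficients: B = A - l M_q, where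
   det B = 1 determines l; A (a - c) = B (b - c) =: u; and the constant terms say that u lies
   on the dual hyperbola u^T adj(M_q) u = q(c).  B is then positive definite, lying on the
   same sheet of {det = 1} as A.  Hence (A00, A01, u) parametrizes the pairs bijectively by an
   open subset of the plane times a hyperbola, a semialgebraic set of dimension 3. *)

Lemma eq_lincomb (T : comNzRingType) (P Q L R : T) : P = Q -> L - R = P - Q -> L = R.
Proof. by move=> -> /eqP; rewrite subrr subr_eq0 => /eqP. Qed.

Local Notation add_eq := (f_equal2 +%R).
Local Notation scale_eq k := (congr1 ( *%R k)).

Ltac linear_combination E := apply: (eq_lincomb E); ring.
Ltac linear_combination_field E := apply: (eq_lincomb E); field; try done.

(** * Polynomial expressions: continuity and reification *)

Section PolynomialExpressions.
Variables (R : realType) (n : nat).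
Implicit Types (p q : pexpr R n) (x c : 'I_n -> R).

Definition sup_ball c (d : R) x := forall i, `|x i - c i| < d.

Definition polynomial_fun (F : ('I_n -> R) -> R) :=
  exists p : pexpr R n, forall x, peval p x = F x.

Lemma peval_lipschitz p c : exists2 C, 0 <= C &
  forall d x, 0 < d -> d <= 1 -> sup_ball c d x -> `|peval p x - peval p c| <= C * d.
Proof.
elim: p => [i|r|p [C C0 IH]|p [C C0 IHp] q [D D0 IHq]|p [C C0 IHp] q [D D0 IHq]] /=.
- by exists 1 => // d x _ _ /(_ i) /ltW; rewrite mul1r.
- by exists 0 => // d x _ _ _; rewrite subrr normr0 mul0r.
- by exists C => // d x d0 d1 /(IH d x d0 d1); rewrite -opprD normrN.
- exists (C + D); first exact: addr_ge0.
  move=> d x d0 d1 xd; rewrite opprD addrACA mulrDl.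
  by rewrite (le_trans (ler_normD _ _)) // lerD ?IHp ?IHq.
- set p0 := peval p c; set q0 := peval q c.
  exists (C * (`|q0| + D) + `|p0| * D).
    by rewrite addr_ge0 ?mulr_ge0 ?addr_ge0.
  move=> d x d0 d1 xd.
  have dp := IHp d x d0 d1 xd; have dq := IHq d x d0 d1 xd.
  have q_bound : `|peval q x| <= `|q0| + D.
    rewrite -[peval q x](subrK q0) addrC (le_trans (ler_normD _ _)) // lerD2l.
    by rewrite (le_trans dq) // ler_piMr.
  have -> : peval p x * peval q x - p0 * q0 =
            (peval p x - p0) * peval q x + p0 * (peval q x - q0) by ring.
  rewrite (le_trans (ler_normD _ _)) // !normrM mulrDl lerD //.
    by rewrite [C * _ * d]mulrAC ler_pM ?normr_ge0.
  by rewrite -mulrA ler_wpM2l ?normr_ge0.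
Qed.

Lemma peval_near p c e : 0 < e ->
  exists2 d, 0 < d & forall x, sup_ball c d x -> `|peval p x - peval p c| < e.
Proof.
move=> e0; have [C C0 HC] := peval_lipschitz p c.
have C1 : 0 < C + 1 by rewrite ltr_wpDl.
set d := Num.min 1 (e / (C + 1)).
have d0 : 0 < d by rewrite lt_min ltr01 divr_gt0.
have d1 : d <= 1 by rewrite ge_min lexx.
have de : d <= e / (C + 1) by rewrite ge_min lexx orbT.
exists d => // x xd.
apply: (le_lt_trans (HC d x d0 d1 xd)).
apply: (le_lt_trans (y := C * (e / (C + 1)))); first by rewrite ler_wpM2l.
by rewrite mulrCA gtr_pMr // ltr_pdivrMr // mul1r ltrDl.
Qed.

Lemma polynomial_locally_pos F c : polynomial_fun F -> 0 < F c ->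
  exists2 d, 0 < d & forall x, sup_ball c d x -> 0 < F x.
Proof.
move=> [p pF] Fc; have [d d0 near] := peval_near p c Fc.
exists d => // x /near; rewrite !pF ltr_norml => /andP[lt _].
by rewrite -(subrK (F c) (F x)) -ltrBlDr sub0r.
Qed.

Lemma polynomial_locally_neq0 F c : polynomial_fun F -> F c != 0 ->
  exists2 d, 0 < d & forall x, sup_ball c d x -> F x != 0.
Proof.
move=> [p pF] Fc.
have F2 : polynomial_fun (fun x => F x ^+ 2) by exists (PMul p p) => x /=; rewrite pF expr2.
have Fc2 : 0 < F c ^+ 2 by rewrite exprn_even_gt0.
have [d d0 near] := polynomial_locally_pos F2 Fc2.
by exists d => // x /near; rewrite exprn_even_gt0.
Qed.

End PolynomialExpressions.


Section Reification.
Variables (R : realType) (n : nat) (x : 'I_n -> R).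
Implicit Types (p q : pexpr R n) (F G : sformula R n) (a b : R).

Lemma peval_var i : peval (PVar R i) x = x i. Proof. by []. Qed.
Lemma peval_const a : peval (PConst n a) x = a. Proof. by []. Qed.
Lemma peval_opp p a : peval p x = a -> peval (POpp p) x = - a.
Proof. by move=> /= ->. Qed.
Lemma peval_add p q a b : peval p x = a -> peval q x = b -> peval (PAdd p q) x = a + b.
Proof. by move=> /= -> ->. Qed.
Lemma peval_mul p q a b : peval p x = a -> peval q x = b -> peval (PMul p q) x = a * b.
Proof. by move=> /= -> ->. Qed.
Lemma peval_sqr p a : peval p x = a -> peval (PMul p p) x = a ^+ 2.
Proof. by move=> /= ->; rewrite expr2. Qed.

Lemma sholds_pos p a : peval p x = a -> (0 < a <-> sholds (SPos p) x).
Proof. by move=> /= ->. Qed.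
Lemma sholds_neq0 p a : peval p x = a -> (a != 0 <-> sholds (SNot (SZero p)) x).
Proof. by move=> /= ->; split => /eqP. Qed.
Lemma sholds_eq p q a b : peval p x = a -> peval q x = b ->
  (a = b <-> sholds (SZero (PAdd p (POpp q))) x).
Proof. by move=> /= -> ->; split => [->|/eqP]; rewrite ?subrr // subr_eq0 => /eqP. Qed.
Lemma sholds_and P Q F G : (P <-> sholds F x) -> (Q <-> sholds G x) ->
  (P /\ Q <-> sholds (SAnd F G) x).
Proof. by move=> /= -> ->. Qed.

End Reification.

Ltac reify_peval :=
  lazymatch goal with
  | |- peval _ ?x = ?x ?i => exact: peval_var
  | |- peval _ _ = _ + _ => apply: peval_add; reify_peval
  | |- peval _ _ = _ * _ => apply: peval_mul; reify_peval
  | |- peval _ _ = - _ => apply: peval_opp; reify_peval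
  | |- peval _ _ = _ ^+ 2 => apply: peval_sqr; reify_peval
  | |- peval _ _ = _ => exact: peval_const
  end.

Ltac reify_sholds :=
  lazymatch goal with
  | |- _ /\ _ <-> _ => apply: sholds_and; reify_sholds
  | |- is_true (0 < _) <-> _ => apply: sholds_pos; reify_peval
  | |- is_true (_ != 0) <-> _ => apply: sholds_neq0; reify_peval
  | |- _ = _ <-> _ => apply: sholds_eq; reify_peval
  end.

Ltac semialgebraic_reify :=
  eexists => ?; lazymatch goal with |- ?P <-> ?Q =>
    let P' := eval cbv beta in P in change (P' <-> Q) end; reify_sholds.
Ltac polynomial_reify :=
  eexists => ?; lazymatch goal with |- ?P = ?Q =>
    let Q' := eval cbv beta in Q in change (P = Q') end; reify_peval.

(** * Conics and the rigidity of hyperbolas *)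

Record conic (R : Type) := Conic { cxx : R; cxy : R; cyy : R; cx : R; cy : R; c1 : R }.

Section Conics.
Variable R : realFieldType.
Implicit Types (k h : conic R) (l x y : R).

Definition conic_form k x y := cxx k * x ^+ 2 + cxy k * x * y + cyy k * y ^+ 2.
Definition conic_eval k x y := conic_form k x y + cx k * x + cy k * y + c1 k.
Definition conic_disc k := cxy k ^+ 2 - 4 * cxx k * cyy k.
Definition scale_conic l k :=
  Conic (l * cxx k) (l * cxy k) (l * cyy k) (l * cx k) (l * cy k) (l * c1 k).
Definition conic_dot k h := cxx k * cxx h + cxy k * cxy h + cyy k * cyy h +
  cx k * cx h + cy k * cy h + c1 k * c1 h.

Lemma conic_formZ k l x y : conic_form k (l * x) (l * y) = l ^+ 2 * conic_form k x y.
Proof. by rewrite /conic_form; ring. Qed.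

Lemma conic_evalZ l k x y : conic_eval (scale_conic l k) x y = l * conic_eval k x y.
Proof. by rewrite /conic_eval /conic_form /=; ring. Qed.

Lemma conic_eqE k h : k = h <->
  cxx k = cxx h /\ cxy k = cxy h /\ cyy k = cyy h /\ cx k = cx h /\ cy k = cy h /\ c1 k = c1 h.
Proof.
split=> [-> //|]; case: k h => ? ? ? ? ? ? [? ? ? ? ? ?] /=.
by case=> -> [-> [-> [-> [-> ->]]]].
Qed.

Lemma conic_dot_self_neq0 k : 0 < conic_disc k -> conic_dot k k != 0.
Proof.
rewrite /conic_disc /conic_dot => disc; apply/lt0r_neq0.
have := sqr_ge0 (cxx k + cyy k); have := sqr_ge0 (cx k); have := sqr_ge0 (cy k).
have := sqr_ge0 (c1 k); nra.
Qed.

Lemma scale_conic_exists k h : conic_dot h h != 0 ->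
  (exists2 l, l != 0 & k = scale_conic l h) <->
  conic_dot k h != 0 /\ scale_conic (conic_dot h h) k = scale_conic (conic_dot k h) h.
Proof.
move=> hh0; split=> [[l l0 ->]|[kh0 /conic_eqE /= E]].
  have -> : conic_dot (scale_conic l h) h = l * conic_dot h h.
    by rewrite /conic_dot /=; ring.
  by split; [rewrite mulf_neq0 | apply/conic_eqE => /=; do !split; ring].
exists (conic_dot k h / conic_dot h h); first by rewrite mulf_neq0 ?invr_eq0.
have solve a b : conic_dot h h * a = conic_dot k h * b -> a = conic_dot k h / conic_dot h h * b.
  by move=> ab; rewrite mulrAC -ab mulrAC divff ?mul1r.
case: E => Exx [Exy [Eyy [Ex [Ey E1]]]].
by apply/conic_eqE => /=; do !split; apply: solve.
Qed.

Lemma conic_eq0_near k a b e : 0 < e ->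
  (forall x y, `|x - a| < e -> `|y - b| < e -> conic_eval k x y = 0) ->
  k = Conic 0 0 0 0 0 0.
Proof.
move=> e0 vanish; set s := e / 2.
have s0 : 0 < s by rewrite divr_gt0.
have se : `|s| < e by rewrite gtr0_norm // /s ltr_pdivrMr // ltr_pMr // ltr1n.
have at_shift u v : `|u| < e -> `|v| < e -> conic_eval k (a + u) (b + v) = 0.
  by move=> ue ve; apply: vanish; rewrite addrC addKr.
have z0 : `|0 : R| < e by rewrite normr0.
have nse : `|- s| < e by rewrite normrN.
have P00 := at_shift 0 0 z0 z0; have Ppp := at_shift s s se se.
have Pp0 := at_shift s 0 se z0; have Pm0 := at_shift (- s) 0 nse z0.
have P0p := at_shift 0 s z0 se; have P0m := at_shift 0 (- s) z0 nse.
move: P00 Pp0 Pm0 P0p P0m Ppp; rewrite /conic_eval /conic_form.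
move=> P00 Pp0 Pm0 P0p P0m Ppp.
have s1 : s != 0 by rewrite lt0r_neq0.
have s2 : s ^+ 2 != 0 by rewrite sqrf_eq0.
have Exx : cxx k = 0.
  apply: (mulIf s2); rewrite mul0r.
  by linear_combination_field (scale_eq (1/2) (add_eq (add_eq Pp0 Pm0) (scale_eq (-2) P00))).
have Eyy : cyy k = 0.
  apply: (mulIf s2); rewrite mul0r.
  by linear_combination_field (scale_eq (1/2) (add_eq (add_eq P0p P0m) (scale_eq (-2) P00))).
have Exy : cxy k = 0.
  apply: (mulIf s2); rewrite mul0r.
  by linear_combination
    (add_eq (add_eq Ppp (scale_eq (-1) Pp0)) (add_eq (scale_eq (-1) P0p) P00)).
rewrite Exx Exy Eyy in P00 Pp0 Pm0 P0p P0m.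
have Ex : cx k = 0.
  apply: (mulIf s1); rewrite mul0r.
  by linear_combination_field (scale_eq (1/2) (add_eq Pp0 (scale_eq (-1) Pm0))).
have Ey : cy k = 0.
  apply: (mulIf s1); rewrite mul0r.
  by linear_combination_field (scale_eq (1/2) (add_eq P0p (scale_eq (-1) P0m))).
rewrite Ex Ey in P00; apply/conic_eqE => /=; do !split => //.
by linear_combination P00.
Qed.

End Conics.

Lemma ord2P (i : 'I_2) : i = 0 \/ i = 1.
Proof. by case: i => -[|[|//]] ?; [left|right]; apply: val_inj. Qed.

Definition pt2 (R : Type) (a b : R) : 'I_2 -> R := fun i => if i == 0 then a else b.

Lemma sup_ball_pt2 (R : realType) (c : 'I_2 -> R) d a b :
  `|a - c 0| < d -> `|b - c 1| < d -> sup_ball c d (pt2 a b).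
Proof. by move=> ad bd i; case: (ord2P i) => ->. Qed.

Section Hyperbola.
Variables (R : realType) (h : conic R).
Hypothesis h_disc : 0 < conic_disc h.

Definition ctr1 := (2 * cyy h * cx h - cxy h * cy h) / conic_disc h.
Definition ctr2 := (2 * cxx h * cy h - cxy h * cx h) / conic_disc h.
Definition ctr_val := conic_eval h ctr1 ctr2.
Definition grad1 k := 2 * cxx k * ctr1 + cxy k * ctr2 + cx k.
Definition grad2 k := cxy k * ctr1 + 2 * cyy k * ctr2 + cy k.

Lemma grad1_center : grad1 h = 0.
Proof.
by move: (lt0r_neq0 h_disc); rewrite /grad1 /ctr1 /ctr2 /conic_disc => ?; field.
Qed.

Lemma grad2_center : grad2 h = 0.
Proof.
by move: (lt0r_neq0 h_disc); rewrite /grad2 /ctr1 /ctr2 /conic_disc => ?; field.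
Qed.

Lemma conic_eval_ctrD k y1 y2 : conic_eval k (ctr1 + y1) (ctr2 + y2) =
  conic_form k y1 y2 + grad1 k * y1 + grad2 k * y2 + conic_eval k ctr1 ctr2.
Proof. by rewrite /conic_eval /conic_form /grad1 /grad2; ring. Qed.

Lemma conic_form_indefinite t : t != 0 -> exists w1 w2, 0 < t * conic_form h w1 w2.
Proof.
rewrite /conic_form => t0; have [a0|a0] := eqVneq (cxx h) 0.
  have b0 : cxy h != 0.
    apply: contraTneq h_disc => b0.
    by rewrite /conic_disc a0 b0 expr0n /= !mulr0 mul0r subrr ltxx.
  exists ((t - cyy h) / cxy h), 1.
  have -> : cxx h * ((t - cyy h) / cxy h) ^+ 2 + cxy h * ((t - cyy h) / cxy h) * 1 +
    cyy h * 1 ^+ 2 = t by rewrite a0; field.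
  by rewrite -expr2 exprn_even_gt0.
have [ta|ta] := ltP 0 (t * cxx h).
  by exists 1, 0; rewrite expr1n mulr1 mulr0 expr0n /= mulr0 !addr0.
exists (cxy h), (- 2 * cxx h).
have -> : t * (cxx h * cxy h ^+ 2 + cxy h * cxy h * (- 2 * cxx h) + cyy h * (- 2 * cxx h) ^+ 2)
  = - (t * cxx h) * conic_disc h by rewrite /conic_disc; ring.
by rewrite mulr_gt0 // oppr_gt0 lt_neqAle ta mulf_neq0.
Qed.

Section ZeroSet.
Variable k : conic R.
Hypothesis same_zeros : forall x y, conic_eval k x y = 0 <-> conic_eval h x y = 0.

(* The line through the centre in direction w meets h at c +- s w; the odd and even parts
   of k along it vanish. *)
Lemma conic_chord w1 w2 : 0 < - ctr_val * conic_form h w1 w2 ->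
  grad1 k * w1 + grad2 k * w2 = 0 /\
  ctr_val * conic_form k w1 w2 - conic_eval k ctr1 ctr2 * conic_form h w1 w2 = 0.
Proof.
set m := conic_form h w1 w2 => pos.
have m0 : m != 0 by apply: contraTneq pos => ->; rewrite mulr0 ltxx.
set t := - ctr_val / m.
have tm : t * m = - ctr_val by rewrite /t mulfVK.
have t0 : 0 < t.
  have -> : t = - ctr_val * m / m ^+ 2 by rewrite /t; field.
  by rewrite divr_gt0 // exprn_even_gt0.
set s := Num.sqrt t; have s0 : 0 < s by rewrite sqrtr_gt0.
have st : s ^+ 2 = t by rewrite sqr_sqrtr ?ltW.
have on_k r : r ^+ 2 = t -> conic_eval k (ctr1 + r * w1) (ctr2 + r * w2) = 0.
  move=> rt; apply/same_zeros.
  by rewrite conic_eval_ctrD grad1_center grad2_center conic_formZ rt tm !mul0r !addr0 addNr.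
have Ep := on_k s st; have Em := on_k (- s) (etrans (sqrrN s) st).
rewrite !conic_eval_ctrD !conic_formZ in Ep Em; rewrite -/m.
split.
  apply: (mulfI (lt0r_neq0 s0)); rewrite mulr0.
  by linear_combination_field (scale_eq (1/2) (add_eq Ep (scale_eq (-1) Em))).
by linear_combination_field
  (add_eq (add_eq (scale_eq (- m / 2) (add_eq Ep Em)) (scale_eq (conic_form k w1 w2 * m) st))
    (scale_eq (conic_form k w1 w2) tm)).
Qed.

Hypothesis ctr_val_neq0 : ctr_val != 0.

Lemma conic_zero_set_rigid : exists2 l, l != 0 & k = scale_conic l h.
Proof.
set k0 := conic_eval k ctr1 ctr2.
have k0_neq0 : k0 != 0 := contra_neq (same_zeros ctr1 ctr2).1 ctr_val_neq0.
have [w1 [w2 w_pos]] : exists w1 w2, 0 < - ctr_val * conic_form h w1 w2.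
  by apply: conic_form_indefinite; rewrite oppr_eq0.
pose F (y : 'I_2 -> R) := - ctr_val * conic_form h (y 0) (y 1).
have F_poly : polynomial_fun F by rewrite /F /conic_form; polynomial_reify.
have [d d0 near] := polynomial_locally_pos F_poly (c := pt2 w1 w2) w_pos.
have chord y1 y2 : `|y1 - w1| < d -> `|y2 - w2| < d -> _ :=
  fun y1d y2d => conic_chord (w1 := y1) (w2 := y2) (near _ (sup_ball_pt2 y1d y2d)).
have /conic_eqE /= [_ [_ [_ [g1 [g2 _]]]]] :
    Conic 0 0 0 (grad1 k) (grad2 k) 0 = Conic 0 0 0 0 0 0.
  apply: (conic_eq0_near d0) => y1 y2 y1d y2d.
  have [E _] := chord _ _ y1d y2d.
  by rewrite /conic_eval /conic_form /=; linear_combination E.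
have /conic_eqE /= [Exx [Exy [Eyy _]]] : Conic (ctr_val * cxx k - k0 * cxx h)
    (ctr_val * cxy k - k0 * cxy h) (ctr_val * cyy k - k0 * cyy h) 0 0 0 = Conic 0 0 0 0 0 0.
  apply: (conic_eq0_near d0) => y1 y2 y1d y2d.
  have [_ E] := chord _ _ y1d y2d.
  by move: E; rewrite -/k0 /conic_eval /conic_form /= => E; linear_combination E.
set l := k0 / ctr_val.
have Exx' : cxx k = l * cxx h by rewrite /l; linear_combination_field (scale_eq ctr_val^-1 Exx).
have Exy' : cxy k = l * cxy h by rewrite /l; linear_combination_field (scale_eq ctr_val^-1 Exy).
have Eyy' : cyy k = l * cyy h by rewrite /l; linear_combination_field (scale_eq ctr_val^-1 Eyy).
have gh1 := grad1_center; have gh2 := grad2_center.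
move: g1 g2 gh1 gh2; rewrite /grad1 /grad2 Exx' Exy' Eyy' => g1 g2 gh1 gh2.
have Ex : cx k = l * cx h by linear_combination (add_eq g1 (scale_eq (- l) gh1)).
have Ey : cy k = l * cy h by linear_combination (add_eq g2 (scale_eq (- l) gh2)).
have kval : conic_eval k ctr1 ctr2 = l * conic_eval h ctr1 ctr2 by rewrite /l divfK.
move: kval; rewrite /conic_eval /conic_form Exx' Exy' Eyy' Ex Ey => kval.
exists l; first by rewrite mulf_neq0 ?invr_eq0.
by apply/conic_eqE => /=; do !split => //; linear_combination kval.
Qed.

End ZeroSet.
End Hyperbola.

(** * HR-cones *)

Record cone (R : Type) := Cone { kxx : R; kxy : R; kyy : R; apx : R; apy : R }.

Section Cones.
Variable R : realType.
Implicit Types (K L : cone R) (x y : R).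

Definition cone_form K w1 w2 := kxx K * w1 ^+ 2 + 2 * kxy K * w1 * w2 + kyy K * w2 ^+ 2.
Definition cone_eval K x y := cone_form K (x - apx K) (y - apy K).
Definition hr_shape K := 0 < kxx K /\ kxx K * kyy K - kxy K ^+ 2 = 1.

Lemma cone_form_sos K w1 w2 : kxx K * kyy K - kxy K ^+ 2 = 1 ->
  kxx K * cone_form K w1 w2 = (kxx K * w1 + kxy K * w2) ^+ 2 + w2 ^+ 2.
Proof. by move=> det1; rewrite /cone_form; linear_combination (scale_eq (w2 ^+ 2) det1). Qed.

Lemma cone_form_ge0 K w1 w2 : hr_shape K -> 0 <= cone_form K w1 w2.
Proof.
by case=> pos det1; rewrite -(pmulr_rge0 _ pos) cone_form_sos // addr_ge0 ?sqr_ge0.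
Qed.

Lemma cone_form_gt0 K w1 w2 : hr_shape K -> (w1 != 0) || (w2 != 0) ->
  0 < cone_form K w1 w2.
Proof.
case=> pos det1; rewrite -(pmulr_rgt0 _ pos) cone_form_sos //.
have [->|w2_0] := eqVneq w2 0; last by rewrite ltr_wpDl ?sqr_ge0 ?exprn_even_gt0.
rewrite orbF => w1_0.
by rewrite mulr0 addr0 [0 ^+ 2]expr2 mulr0 addr0 exprn_even_gt0 //= mulf_neq0 // lt0r_neq0.
Qed.

Definition cone_diff K L : conic R := Conic
  (kxx K - kxx L) (2 * (kxy K - kxy L)) (kyy K - kyy L)
  (2 * (kxx L * apx L + kxy L * apy L) - 2 * (kxx K * apx K + kxy K * apy K))
  (2 * (kxy L * apx L + kyy L * apy L) - 2 * (kxy K * apx K + kyy K * apy K))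
  (cone_form K (apx K) (apy K) - cone_form L (apx L) (apy L)).

Lemma cone_diff_eval K L x y :
  conic_eval (cone_diff K L) x y = cone_eval K x y - cone_eval L x y.
Proof. by rewrite /conic_eval /conic_form /= /cone_eval /cone_form; ring. Qed.

Definition cone_of (C : cone_param R) : cone R :=
  Cone (C.1 0 0) (C.1 0 1) (C.1 1 1) (C.2 0 0) (C.2 1 0).

Definition sym_mx2 (p q s : R) : 'M[R]_2 :=
  \matrix_(i < 2, j < 2) if i == j then (if i == 0 then p else s) else q.

Definition param_of K : cone_param R := (sym_mx2 (kxx K) (kxy K) (kyy K), vec2 (apx K) (apy K)).

Lemma param_ofK : cancel param_of cone_of.
Proof. by case=> p q s a1 a2; rewrite /cone_of /= !mxE. Qed.

Lemma cone_ofK (C : cone_param R) : C.1 0 1 = C.1 1 0 -> param_of (cone_of C) = C.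
Proof.
case: C => A a /= sym; congr (_, _); apply/matrixP => i j; rewrite !mxE.
  by case: (ord2P i) => ->; case: (ord2P j) => ->.
by rewrite (ord1 j); case: (ord2P i) => ->.
Qed.

Lemma det_mx2 (A : 'M[R]_2) : \det A = A 0 0 * A 1 1 - A 0 1 * A 1 0.
Proof.
rewrite (expand_det_row _ 0) !big_ord_recl big_ord0 /cofactor !det_mx11 !mxE /=.
rewrite /bump /= !addn0 add0n expr0 expr1.
have -> : lift 0 (0 : 'I_1) = 1 :> 'I_2 by apply/val_inj.
have -> : lift 1 (0 : 'I_1) = 0 :> 'I_2 by apply/val_inj.
by ring.
Qed.

Lemma quad_mx2 (A : 'M[R]_2) (w : 'cV[R]_2) : (w^T *m A *m w) 0 0 =
  A 0 0 * w 0 0 ^+ 2 + (A 0 1 + A 1 0) * w 0 0 * w 1 0 + A 1 1 * w 1 0 ^+ 2.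
Proof.
rewrite !mxE !big_ord_recl !big_ord0 !mxE !big_ord_recl !big_ord0 !mxE /=.
have -> : lift 0 (0 : 'I_1) = 1 :> 'I_2 by apply/val_inj.
by ring.
Qed.

Lemma HRparamE (A : 'M[R]_2) (a : 'cV[R]_2) :
  HRparam A a <-> A 0 1 = A 1 0 /\ hr_shape (cone_of (A, a)).
Proof.
rewrite /HRparam /hr_shape /= det_mx2; split.
  move=> [/matrixP/(_ 0 1) At [posdef detA]]; move: At; rewrite mxE => At.
  have e1 : vec2 1 0 != 0 :> 'cV[R]_2.
    by apply/negP => /eqP/matrixP/(_ 0 0); rewrite !mxE /= => /eqP; rewrite oner_eq0.
  move: (posdef _ e1); rewrite quad_mx2 !mxE /= expr1n mulr1 !mulr0 expr0n /= mulr0 !addr0.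
  by move=> pos; rewrite -At expr2 in detA *.
move=> [sym [pos det1]]; split; first by apply/matrixP => i j; rewrite mxE;
  case: (ord2P i) => ->; case: (ord2P j) => ->.
split; last by rewrite -sym -expr2.
move=> v v0; rewrite quad_mx2 -sym.
have -> : A 0 0 * v 0 0 ^+ 2 + (A 0 1 + A 0 1) * v 0 0 * v 1 0 + A 1 1 * v 1 0 ^+ 2 =
  cone_form (cone_of (A, a)) (v 0 0) (v 1 0) by rewrite /cone_form /=; ring.
apply: cone_form_gt0 => //; rewrite -negb_and; apply: contra v0 => /andP[/eqP v0 /eqP v1].
by apply/eqP/matrixP => i j; rewrite mxE (ord1 j); case: (ord2P i) => ->.
Qed.

Lemma HRconeE (A : 'M[R]_2) (a : 'cV[R]_2) x y z : A 0 1 = A 1 0 ->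
  HRcone A a (x, y, z) <-> z ^+ 2 = cone_eval (cone_of (A, a)) x y.
Proof.
move=> sym; rewrite /HRcone quad_mx2 -sym !mxE /= /cone_eval /cone_form /=.
by split=> ->; ring.
Qed.

Lemma proj_interE (A B : 'M[R]_2) (a b : 'cV[R]_2) x y :
  A 0 1 = A 1 0 -> B 0 1 = B 1 0 -> hr_shape (cone_of (A, a)) ->
  proj_inter (A, a) (B, b) (x, y) <->
  cone_eval (cone_of (A, a)) x y = cone_eval (cone_of (B, b)) x y.
Proof.
move=> symA symB hrA; split.
  by case=> z /= [/(HRconeE _ _ _ _ symA) <- /(HRconeE _ _ _ _ symB) <-].
move=> same; have ge0 := cone_form_ge0 (x - apx (cone_of (A, a))) (y - apy (cone_of (A, a))) hrA.
exists (Num.sqrt (cone_eval (cone_of (A, a)) x y)); split.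
  by apply/(HRconeE _ _ _ _ symA); rewrite sqr_sqrtr.
by apply/(HRconeE _ _ _ _ symB); rewrite sqr_sqrtr // -same.
Qed.

End Cones.

(** * Pairs of HR-cones over a hyperbola *)

(* The symmetric matrices of determinant 1 form a two-sheeted hyperboloid, and the mixed
   determinant p1 s2 + s1 p2 - 2 q1 q2 is positive only within a sheet. *)
Lemma det1_same_sheet (R : realFieldType) (p1 q1 s1 p2 q2 s2 : R) :
  0 < p1 -> p1 * s1 - q1 ^+ 2 = 1 -> p2 * s2 - q2 ^+ 2 = 1 ->
  0 < p1 * s2 + s1 * p2 - 2 * q1 * q2 -> 0 < p2.
Proof.
move=> p1_gt0 det1 det2 pos; case: (ltP 0 p2) => // p2_le0.
have p2_lt0 : p2 < 0.
  rewrite lt_neqAle p2_le0 andbT; apply/eqP => p2_0.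
  by move: det2; rewrite p2_0 mul0r sub0r; have := sqr_ge0 q2; lra.
have s2_lt0 : s2 < 0 by nra.
have s1_gt0 : 0 < s1 by nra.
set X := - (p1 * s2 + s1 * p2).
have X_gt0 : 0 < X by rewrite /X; nra.
have X2 : X ^+ 2 = (p1 * s2 - s1 * p2) ^+ 2 + 4 * (1 + q1 ^+ 2) * (1 + q2 ^+ 2).
  rewrite /X; linear_combination
    (add_eq (scale_eq (4 * (p2 * s2)) det1) (scale_eq (4 * (1 + q1 ^+ 2)) det2)).
have : 4 * (q1 * q2) ^+ 2 < X ^+ 2.
  rewrite X2 exprMn.
  have := sqr_ge0 (p1 * s2 - s1 * p2); have := sqr_ge0 q1; have := sqr_ge0 q2; nra.
have : X < - 2 * q1 * q2 by rewrite /X; lra.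
nra.
Qed.

Section ConePairs.
Variables (R : realType) (h : conic R).
Hypothesis h_disc : 0 < conic_disc h.
Implicit Types (K L : cone R).

Definition cone_pair (K L : cone R) :=
  hr_shape K /\ hr_shape L /\ exists2 l, l != 0 & cone_diff K L = scale_conic l h.

Lemma cone_pairs_overE (H : R * R -> Prop) : ctr_val h != 0 ->
  (forall p, H p <-> conic_eval h p.1 p.2 = 0) ->
  forall P, cone_pairs_over H P <->
    [/\ P.1.1 0 1 = P.1.1 1 0, P.2.1 0 1 = P.2.1 1 0 & cone_pair (cone_of P.1) (cone_of P.2)].
Proof.
move=> h_ctr HH [[A a] [B b]]; rewrite /cone_pairs_over /= !HRparamE; split.
  move=> [[symA hrA] [[symB hrB] same]]; split=> //; split=> //; split=> //.
  apply: (conic_zero_set_rigid h_disc _ h_ctr) => x y; rewrite cone_diff_eval; split.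
    move=> /eqP; rewrite subr_eq0 => /eqP E.
    by apply/(HH (x, y))/same/(proj_interE _ _ _ symA symB hrA).
  by move=> /(HH (x, y))/same/(proj_interE _ _ _ symA symB hrA) ->; rewrite subrr.
move=> [symA symB [hrA [hrB [l l0 diffE]]]]; split=> //; split=> // -[x y].
apply: (iff_trans (proj_interE _ _ _ symA symB hrA)); apply: iff_sym.
apply: (iff_trans (HH (x, y))) => /=.
have E : cone_eval (cone_of (A, a)) x y - cone_eval (cone_of (B, b)) x y = l * conic_eval h x y.
  by rewrite -cone_diff_eval diffE conic_evalZ.
split=> [hz|KL]; first by apply/eqP; rewrite -subr_eq0 E hz mulr0.
by move: E; rewrite KL subrr => /esym/eqP; rewrite mulf_eq0 (negbTE l0) => /eqP.
Qed.

(* With c the centre of h and M_h the matrix of its quadratic part, the dual apex of the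
   cone (A, a) is A (a - c); [dual_conic] is u^T adj(M_h) u - h(c), and [mixed_trace p q] is
   p tr(adj(A) M_h) for A = [[p, q], [q, (1 + q^2) / p]]. *)
Definition dual_conic u1 u2 :=
  cyy h * u1 ^+ 2 - cxy h * u1 * u2 + cxx h * u2 ^+ 2 - ctr_val h.
Definition dual_apex1 (K : cone R) := kxx K * (apx K - ctr1 h) + kxy K * (apy K - ctr2 h).
Definition dual_apex2 (K : cone R) := kxy K * (apx K - ctr1 h) + kyy K * (apy K - ctr2 h).
Definition adj_form (K : cone R) u1 u2 :=
  kyy K * u1 ^+ 2 - 2 * kxy K * u1 * u2 + kxx K * u2 ^+ 2.
Definition mixed_trace p q := cyy h * p ^+ 2 + cxx h * (1 + q ^+ 2) - cxy h * p * q.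

(* When ps - q^2 = 1, the cone of matrix A = [[p, q], [q, s]] with dual apex u: its apex
   is c + adj(A) u. *)
Definition cone_at p q s u1 u2 : cone R :=
  Cone p q s (ctr1 h + s * u1 - q * u2) (ctr2 h - q * u1 + p * u2).

(* l is forced by det(A - l M_h) = 1, see [pair_scale]. *)
Definition pair_of_param p q u1 u2 : cone R * cone R :=
  let s := (1 + q ^+ 2) / p in
  let l := - 4 * mixed_trace p q / (p * conic_disc h) in
  (cone_at p q s u1 u2, cone_at (p - l * cxx h) (q - l * cxy h / 2) (s - l * cyy h) u1 u2).

Lemma cone_atK K : kxx K * kyy K - kxy K ^+ 2 = 1 ->
  K = cone_at (kxx K) (kxy K) (kyy K) (dual_apex1 K) (dual_apex2 K).
Proof.
case: K => p q s a1 a2 /= det1; rewrite /cone_at /dual_apex1 /dual_apex2 /=.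
by congr Cone; [linear_combination (scale_eq (- (a1 - ctr1 h)) det1) |
  linear_combination (scale_eq (- (a2 - ctr2 h)) det1)].
Qed.

Lemma dual_apex_cone_at p q s u1 u2 : p * s - q ^+ 2 = 1 ->
  dual_apex1 (cone_at p q s u1 u2) = u1 /\ dual_apex2 (cone_at p q s u1 u2) = u2.
Proof.
by move=> det1; split; rewrite /dual_apex1 /dual_apex2 /=;
  [linear_combination (scale_eq u1 det1) | linear_combination (scale_eq u2 det1)].
Qed.

Lemma cone_eval_ctr K : kxx K * kyy K - kxy K ^+ 2 = 1 ->
  cone_eval K (ctr1 h) (ctr2 h) = adj_form K (dual_apex1 K) (dual_apex2 K).
Proof.
move=> det1; apply: (eq_lincomb (scale_eq (- cone_eval K (ctr1 h) (ctr2 h)) det1)).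
by rewrite /cone_eval /cone_form /adj_form /dual_apex1 /dual_apex2; ring.
Qed.

Section PairShape.
Variables (K L : cone R) (l : R).
Hypotheses (hrK : hr_shape K) (hrL : hr_shape L) (l_neq0 : l != 0).
Hypothesis diffE : cone_diff K L = scale_conic l h.

Lemma pair_shape : [/\ kxx L = kxx K - l * cxx h, kxy L = kxy K - l * cxy h / 2
  & kyy L = kyy K - l * cyy h].
Proof.
move/conic_eqE: diffE => /= [Exx [Exy [Eyy _]]].
by split; [linear_combination (scale_eq (-1) Exx) |
  linear_combination_field (scale_eq (-1/2) Exy) | linear_combination (scale_eq (-1) Eyy)].
Qed.

Lemma pair_scale : l * (kxx K * conic_disc h) = - 4 * mixed_trace (kxx K) (kxy K).
Proof.
case: hrK hrL => _ detK [_]; case: pair_shape => -> -> -> detL.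
have X : l * (l * (cxx h * cyy h - cxy h ^+ 2 / 4) -
    (kxx K * cyy h + kyy K * cxx h - kxy K * cxy h)) = 0.
  by linear_combination_field (add_eq detL (scale_eq (-1) detK)).
move/eqP: X; rewrite mulf_eq0 (negbTE l_neq0) /= => /eqP X.
rewrite /mixed_trace /conic_disc.
by linear_combination_field (add_eq (scale_eq (-4 * kxx K) X) (scale_eq (-4 * cxx h) detK)).
Qed.

Lemma pair_dual_apex : dual_apex1 L = dual_apex1 K /\ dual_apex2 L = dual_apex2 K.
Proof.
move/conic_eqE: diffE => /= [_ [_ [_ [Ex [Ey _]]]]].
have g1 := grad1_center h_disc; have g2 := grad2_center h_disc.
rewrite /grad1 /grad2 in g1 g2; case: pair_shape => Lxx Lxy Lyy.
rewrite /dual_apex1 /dual_apex2; split.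
  by linear_combination_field (add_eq (add_eq (scale_eq (1/2) Ex) (scale_eq (l/2) g1))
    (add_eq (scale_eq (- ctr1 h) Lxx) (scale_eq (- ctr2 h) Lxy))).
by linear_combination_field (add_eq (add_eq (scale_eq (1/2) Ey) (scale_eq (l/2) g2))
  (add_eq (scale_eq (- ctr1 h) Lxy) (scale_eq (- ctr2 h) Lyy))).
Qed.

Lemma pair_dual_conic : dual_conic (dual_apex1 K) (dual_apex2 K) = 0.
Proof.
have := congr1 (fun k => conic_eval k (ctr1 h) (ctr2 h)) diffE.
rewrite /= cone_diff_eval conic_evalZ !cone_eval_ctr; [|by case: hrL|by case: hrK].
case: pair_dual_apex => -> ->; rewrite /adj_form; case: pair_shape => -> -> -> E.
apply: (mulfI l_neq0); rewrite mulr0 /dual_conic /ctr_val.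
by linear_combination_field E.
Qed.

End PairShape.

Lemma hr_shape_yy K : hr_shape K -> kyy K = (1 + kxy K ^+ 2) / kxx K.
Proof. by case=> pos det1; rewrite -det1; field; rewrite lt0r_neq0. Qed.

Lemma cone_pair_param K L : cone_pair K L ->
  [/\ 0 < kxx K, mixed_trace (kxx K) (kxy K) != 0,
      dual_conic (dual_apex1 K) (dual_apex2 K) = 0 &
      (K, L) = pair_of_param (kxx K) (kxy K) (dual_apex1 K) (dual_apex2 K)].
Proof.
move=> [hrK [hrL [l l0 diffE]]]; have scaleE := pair_scale hrK hrL l0 diffE.
have [pK detK] := hrK; have [_ detL] := hrL.
have pd0 : kxx K * conic_disc h != 0 by rewrite mulf_neq0 ?lt0r_neq0.
have tt0 : mixed_trace (kxx K) (kxy K) != 0.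
  have : - 4 * mixed_trace (kxx K) (kxy K) != 0 by rewrite -scaleE mulf_neq0.
  by rewrite mulf_eq0 negb_or => /andP[].
have lE : l = - 4 * mixed_trace (kxx K) (kxy K) / (kxx K * conic_disc h).
  by rewrite -scaleE mulfK.
split=> //; first exact: pair_dual_conic hrK hrL l0 diffE.
rewrite /pair_of_param /= -lE -(hr_shape_yy hrK).
case: (pair_shape diffE) => <- <- <-; case: (pair_dual_apex diffE) => u1E u2E.
by rewrite -(cone_atK detK) -u1E -u2E -(cone_atK detL).
Qed.

Lemma cone_diff_cone_at p q s l u1 u2 : p * s - q ^+ 2 = 1 ->
  (p - l * cxx h) * (s - l * cyy h) - (q - l * cxy h / 2) ^+ 2 = 1 -> dual_conic u1 u2 = 0 ->
  cone_diff (cone_at p q s u1 u2)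
    (cone_at (p - l * cxx h) (q - l * cxy h / 2) (s - l * cyy h) u1 u2) = scale_conic l h.
Proof.
move=> detK detL du; have g1 := grad1_center h_disc; have g2 := grad2_center h_disc.
rewrite /grad1 /grad2 in g1 g2; apply/conic_eqE; rewrite /= /cone_form /=.
do !split; [ring | by field | ring | | | ].
- by linear_combination_field (add_eq (add_eq (scale_eq (2 * u1) detL)
    (scale_eq (-2 * u1) detK)) (scale_eq (- l) g1)).
- by linear_combination_field (add_eq (add_eq (scale_eq (2 * u2) detL)
    (scale_eq (-2 * u2) detK)) (scale_eq (- l) g2)).
move: du; rewrite /dual_conic /ctr_val /conic_eval /conic_form => du.
by linear_combination_field (add_eq (add_eq
  (scale_eq (s * u1 ^+ 2 - 2 * q * u1 * u2 + p * u2 ^+ 2 + 2 * (ctr1 h * u1 + ctr2 h * u2)) detK)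
  (scale_eq (- ((s - l * cyy h) * u1 ^+ 2 - 2 * (q - l * cxy h / 2) * u1 * u2 +
      (p - l * cxx h) * u2 ^+ 2 + 2 * (ctr1 h * u1 + ctr2 h * u2))) detL))
  (add_eq (scale_eq l du) (add_eq (scale_eq (l * ctr1 h) g1) (scale_eq (l * ctr2 h) g2)))).
Qed.

Lemma pair_of_param_spec p q u1 u2 :
  0 < p -> mixed_trace p q != 0 -> dual_conic u1 u2 = 0 ->
  let P := pair_of_param p q u1 u2 in
  cone_pair P.1 P.2 /\ [/\ kxx P.1 = p, kxy P.1 = q, dual_apex1 P.1 = u1 & dual_apex2 P.1 = u2].
Proof.
move=> p0 tt0 du; rewrite /pair_of_param /=.
set s := (1 + q ^+ 2) / p; set l := - 4 * mixed_trace p q / (p * conic_disc h).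
have p_neq0 : p != 0 := lt0r_neq0 p0.
have pd0 : p * conic_disc h != 0 by rewrite mulf_neq0 ?lt0r_neq0.
have detK : p * s - q ^+ 2 = 1 by rewrite /s; field.
have lE : l * (p * conic_disc h) = - 4 * mixed_trace p q by rewrite /l divfK.
have l0 : l != 0.
  apply: contra_neq tt0 => l0; apply/eqP; move: lE; rewrite l0 mul0r => /esym/eqP.
  by rewrite mulf_eq0 oppr_eq0 pnatr_eq0.
have detL : (p - l * cxx h) * (s - l * cyy h) - (q - l * cxy h / 2) ^+ 2 = 1.
  move: lE; rewrite /mixed_trace /conic_disc => lE.
  by linear_combination_field
    (add_eq (scale_eq (- l / (4 * p)) lE) (scale_eq (1 - l * cxx h / p) detK)).
have pL : 0 < p - l * cxx h.
  apply: (det1_same_sheet p0 detK detL).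
  have -> : p * (s - l * cyy h) + s * (p - l * cxx h) - 2 * q * (q - l * cxy h / 2) =
    2 + l ^+ 2 * conic_disc h / 4.
    move: lE; rewrite /mixed_trace /conic_disc => lE.
    by linear_combination_field
      (add_eq (scale_eq (- l / (4 * p)) lE) (scale_eq (2 - l * cxx h / p) detK)).
  by have := mulr_ge0 (sqr_ge0 l) (ltW h_disc); lra.
have [apex1 apex2] := dual_apex_cone_at u1 u2 detK.
split; last by split.
split; first by split.
split; first by split.
by exists l => //; apply: cone_diff_cone_at.
Qed.
End ConePairs.

(** * The parameter space *)

Section Parametrization.
Variables (R : realType) (h : conic R).
Hypothesis h_disc : 0 < conic_disc h.

(* Coordinates (A00, A01, u1, u2) of the first cone: its matrix row and its dual apex. *)
Definition param_space (x : 'I_4 -> R) : Prop :=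
  0 < x (inord 0) /\ mixed_trace h (x (inord 0)) (x (inord 1)) != 0 /\
  dual_conic h (x (inord 2)) (x (inord 3)) = 0.

Definition cone_coords (K : cone R) : 'I_4 -> R :=
  fun i => [:: kxx K; kxy K; dual_apex1 h K; dual_apex2 h K]`_i.

Lemma cone_coordsE K : [/\ cone_coords K (inord 0) = kxx K, cone_coords K (inord 1) = kxy K,
  cone_coords K (inord 2) = dual_apex1 h K & cone_coords K (inord 3) = dual_apex2 h K].
Proof. by rewrite /cone_coords !inordK. Qed.

Lemma param_space_semialgebraic : semialgebraic param_space.
Proof. by rewrite /param_space /mixed_trace /dual_conic; semialgebraic_reify. Qed.

Lemma mixed_trace_neq0 : exists q, mixed_trace h 1 q != 0.
Proof.
have [E0|] := eqVneq (mixed_trace h 1 0) 0; last by exists 0.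
have [E1|] := eqVneq (mixed_trace h 1 1) 0; last by exists 1.
have [E2|] := eqVneq (mixed_trace h 1 (-1)) 0; last by exists (-1).
exfalso; move: E0 E1 E2 h_disc; rewrite /mixed_trace /conic_disc => E0 E1 E2.
have b0 : cxy h = 0 by linear_combination_field (add_eq (scale_eq (-1/2) E1) (scale_eq (1/2) E2)).
have a0 : cxx h = 0.
  by linear_combination_field
    (add_eq (add_eq (scale_eq (-1) E0) (scale_eq (1/2) E1)) (scale_eq (1/2) E2)).
by rewrite a0 b0 expr0n /= !mulr0 mul0r subrr ltxx.
Qed.

Lemma dual_conic_solvable :
  exists2 U, 0 < U & forall u1, U <= u1 -> exists u2, dual_conic h u1 u2 = 0.
Proof.
rewrite /dual_conic; have [a0|a0] := eqVneq (cxx h) 0.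
  have b0 : cxy h != 0.
    apply: contraTneq h_disc => b0.
    by rewrite /conic_disc a0 b0 expr0n /= !mulr0 mul0r subrr ltxx.
  exists 1 => // u1 u1_ge1; have u1_0 : u1 != 0 by rewrite gt_eqF // (lt_le_trans ltr01).
  exists ((cyy h * u1 ^+ 2 - ctr_val h) / (cxy h * u1)).
  by rewrite a0; field; apply/andP.
have [D D0 DE] : exists2 D, 0 <= D & conic_disc h * D = `|4 * cxx h * ctr_val h|.
  by exists (`|4 * cxx h * ctr_val h| / conic_disc h);
    rewrite ?divr_ge0 ?normr_ge0 ?ltW // mulrC divfK ?lt0r_neq0.
exists (1 + D) => [|u1 u1_ge]; first by rewrite ltr_wpDr.
have disc_pos : 0 <= conic_disc h * u1 ^+ 2 + 4 * cxx h * ctr_val h.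
  have : - (4 * cxx h * ctr_val h) <= `|4 * cxx h * ctr_val h| by rewrite -normrN ler_norm.
  have : 1 + D <= u1 ^+ 2 by nra.
  rewrite -subr_ge0 => /(mulr_ge0 (ltW h_disc)); rewrite mulrBr mulrDr mulr1 DE.
  have := h_disc; lra.
exists ((cxy h * u1 + Num.sqrt (conic_disc h * u1 ^+ 2 + 4 * cxx h * ctr_val h)) / (2 * cxx h)).
have := sqr_sqrtr disc_pos; rewrite /conic_disc => sq.
by linear_combination_field (scale_eq (1 / (4 * cxx h)) sq).
Qed.

Lemma param_space_interior :
  has_interior (coord_proj (widen_ord (leqnSn 3)) param_space).
Proof.
have [q0 tt0] := mixed_trace_neq0; have [U U0 solve] := dual_conic_solvable.
pose y0 (i : 'I_3) : R := [:: 1; q0; U + 1]`_i.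
pose F (y : 'I_3 -> R) := mixed_trace h (y (inord 0)) (y (inord 1)).
have F_poly : polynomial_fun F by rewrite /F /mixed_trace; polynomial_reify.
have Fy0 : F y0 != 0 by rewrite /F /y0 !inordK.
have [d d0 near] := polynomial_locally_neq0 F_poly Fy0.
have half0 : (0 : R) < 1 / 2 by rewrite divr_gt0.
exists y0, (Num.min d (1 / 2)); split; first by rewrite lt_min d0.
move=> y yr; have [yd yh] : sup_ball y0 d y /\ sup_ball y0 (1 / 2) y.
  by split=> i; have := yr i; rewrite lt_min => /andP[].
have [u2 u2E] : exists u2, dual_conic h (y (inord 2)) u2 = 0.
  apply: solve; have := yh (inord 2); rewrite /y0 inordK //= ltr_norml => /andP[lt _]; lra.
exists (fun i : 'I_4 => if (i < 3)%N then y (inord i) else u2); split.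
  rewrite /param_space !inordK //=; split; last by split=> //; exact: near.
  by have := yh (inord 0); rewrite /y0 inordK //= ltr_norml => /andP[lt _]; lra.
by move=> j; rewrite /= ltn_ord inord_val.
Qed.

Lemma param_space_no_interior (f : 'I_4 -> 'I_4) : injective f ->
  ~ has_interior (coord_proj f param_space).
Proof.
move=> f_inj [y0 [e [e0 ball_in]]].
pose j2 := invF f_inj (inord 2); pose j3 := invF f_inj (inord 3).
have j23 : j2 != j3.
  apply: contraTneq isT => /(congr1 f); rewrite !f_invF => /(congr1 (@nat_of_ord 4)).
  by rewrite !inordK.
have /conic_eqE /= [c0 [b0 [a0 _]]] :
    Conic (cyy h) (- cxy h) (cxx h) 0 0 (- ctr_val h) = Conic 0 0 0 0 0 0.
  apply: (conic_eq0_near (a := y0 j2) (b := y0 j3) e0) => u1 u2 u1e u2e.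
  pose y j := if j == j2 then u1 else if j == j3 then u2 else y0 j.
  have [x [[_ [_ du]] yx]] : coord_proj f param_space y.
    apply: ball_in => j; rewrite /y.
    have [->|_] := eqVneq j j2; first by [].
    have [->|_] := eqVneq j j3; first by [].
    by rewrite subrr normr0.
  have x2 : x (inord 2) = u1 by rewrite -[inord 2](f_invF f_inj) -yx /y eqxx.
  have x3 : x (inord 3) = u2.
    by rewrite -[inord 3](f_invF f_inj) -yx /y eq_sym (negbTE j23) eqxx.
  by move: du; rewrite x2 x3 /dual_conic /conic_eval /conic_form /= => du; linear_combination du.
move: h_disc; rewrite /conic_disc a0 c0 (_ : cxy h = 0); last by rewrite -[cxy h]opprK b0 oppr0.
by rewrite expr0n /= !mulr0 subrr ltxx.
Qed.

Lemma param_space_dim : sa_dim param_space 3.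
Proof.
split; last exact: param_space_no_interior.
exists (widen_ord (leqnSn 3)); split; last exact: param_space_interior.
by move=> i j /(congr1 val) /= /val_inj.
Qed.

End Parametrization.

Lemma forall_inord n (P : 'I_n.+1 -> Prop) :
  (forall k, (k <= n)%N -> P (inord k)) -> forall i, P i.
Proof. by move=> HP i; rewrite -(inord_val i); apply: HP; rewrite -ltnS. Qed.

Section ConePairCoordinates.
Variables (R : realType) (h : conic R) (H : R * R -> Prop).
Hypotheses (h_disc : 0 < conic_disc h) (h_ctr : ctr_val h != 0).
Hypothesis HH : forall p, H p <-> conic_eval h p.1 p.2 = 0.
Local Notation D := (cone_pairs_over H).

Definition pair_coords (P : cone_param R * cone_param R) := cone_coords h (cone_of P.1).

Definition params_pair (s : 'I_4 -> R) : cone_param R * cone_param R :=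
  let P := pair_of_param h (s (inord 0)) (s (inord 1)) (s (inord 2)) (s (inord 3)) in
  (param_of P.1, param_of P.2).

Lemma pair_coords_mem P : D P -> param_space h (pair_coords P).
Proof.
move=> /(cone_pairs_overE h_disc h_ctr HH) [_ _ /(cone_pair_param h_disc) [? ? ? _]].
by rewrite /param_space /pair_coords; case: (cone_coordsE h (cone_of P.1)) => -> -> -> ->.
Qed.

Lemma pair_coordsK P : D P -> params_pair (pair_coords P) = P.
Proof.
case/(cone_pairs_overE h_disc h_ctr HH) => symA symB /(cone_pair_param h_disc) [_ _ _ E].
rewrite /params_pair /pair_coords; case: (cone_coordsE h (cone_of P.1)) => -> -> -> ->.
by rewrite -E (cone_ofK symA) (cone_ofK symB); case: P {symA symB E}.
Qed.

Lemma params_pair_spec s : param_space h s ->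
  D (params_pair s) /\ forall i, pair_coords (params_pair s) i = s i.
Proof.
case=> p0 [tt0 du]; have [pair [p q u1 u2]] := pair_of_param_spec h_disc p0 tt0 du.
split.
  apply/(cone_pairs_overE h_disc h_ctr HH); rewrite /params_pair /= !param_ofK.
  by split=> //; rewrite !mxE.
apply: forall_inord => k; rewrite /pair_coords /params_pair param_ofK.
move: p q u1 u2; set K := (pair_of_param _ _ _ _ _).1 => p q u1 u2.
case: (cone_coordsE h K) => c0 c1 c2 c3.
by do 4?[case: k => [|k]]; rewrite // ?c0 ?c1 ?c2 ?c3.
Qed.

Lemma pair_coords_inj P Q : D P -> D Q -> (forall i, pair_coords P i = pair_coords Q i) -> P = Q.
Proof. by move=> DP DQ PQ; rewrite -(pair_coordsK DP) -(pair_coordsK DQ) /params_pair !PQ. Qed.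

Lemma pair_coords_surj s : param_space h s -> exists P, D P /\ forall i, pair_coords P i = s i.
Proof. by move=> /params_pair_spec; exists (params_pair s). Qed.

Lemma cone_pairP K L : cone_pair h K L <->
  hr_shape K /\ hr_shape L /\ conic_dot (cone_diff K L) h != 0 /\
  (let G := cone_diff K L in let a := conic_dot h h in let b := conic_dot G h in
   a * cxx G = b * cxx h /\ a * cxy G = b * cxy h /\ a * cyy G = b * cyy h /\
   a * cx G = b * cx h /\ a * cy G = b * cy h /\ a * c1 G = b * c1 h).
Proof.
rewrite /cone_pair (scale_conic_exists _ (conic_dot_self_neq0 h_disc)) conic_eqE.
by split=> -[hrK [hrL pr]]; split=> //; split.
Qed.

Definition coords_cone (w : 'I_14 -> R) k : cone R :=
  Cone (w (inord k)) (w (inord k.+1)) (w (inord k.+2)) (w (inord k.+3)) (w (inord k.+4)).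

Lemma restricted_graphE w : restricted_graph D pair_coords w <->
  cone_pair h (coords_cone w 0) (coords_cone w 5) /\
  w (inord 10) = w (inord 0) /\ w (inord 11) = w (inord 1) /\
  w (inord 12) = dual_apex1 h (coords_cone w 0) /\
  w (inord 13) = dual_apex2 h (coords_cone w 0).
Proof.
split=> [[P [DP wE]]|[pair [E10 [E11 [E12 E13]]]]].
  have wk k : (k < 14)%N ->
      w (inord k) = if (k < 10)%N then encode_pair P (inord k)
                    else pair_coords P (inord (k - 10)).
    by move=> lt; rewrite wE inordK.
  have [_ _ pair] := (cone_pairs_overE h_disc h_ctr HH P).1 DP.
  have -> : coords_cone w 0 = cone_of P.1 by rewrite /coords_cone !wk //= /encode_pair !inordK.
  have -> : coords_cone w 5 = cone_of P.2 by rewrite /coords_cone !wk //= /encode_pair !inordK.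
  by rewrite !wk //= /pair_coords /cone_coords /encode_pair !inordK.
exists (param_of (coords_cone w 0), param_of (coords_cone w 5)); split.
  by apply/(cone_pairs_overE h_disc h_ctr HH); rewrite /= !param_ofK !mxE.
apply: forall_inord => k; rewrite /pair_coords /= param_ofK.
case: (cone_coordsE h (coords_cone w 0)) => c0 c1 c2 c3.
by do 14?[case: k => [|k]]; rewrite // ?inordK //= /encode_pair ?inordK //= ?mxE ?c0 ?c1 ?c2 ?c3.
Qed.

Lemma pair_graph_semialgebraic : semialgebraic (restricted_graph D pair_coords).
Proof.
eexists => w; apply: (iff_trans (restricted_graphE w)).
apply: (iff_trans (and_iff_compat_r _ (cone_pairP _ _))).
rewrite /hr_shape /conic_dot /cone_diff /cone_form /dual_apex1 /dual_apex2 /coords_cone.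
cbn [kxx kxy kyy apx apy cxx cxy cyy cx cy c1].
reify_sholds.
Qed.

End ConePairCoordinates.

Lemma conic_det3 (R : realType) (a b c d e f : R) :
  0 < conic_disc (Conic a b c d e f) ->
  \det (\matrix_(i < 3, j < 3)
          (nth 0 (nth [::] [:: [:: a; b / 2; d / 2]; [:: b / 2; c; e / 2];
                            [:: d / 2; e / 2; f]] i) j)) =
  - conic_disc (Conic a b c d e f) / 4 * ctr_val (Conic a b c d e f).
Proof.
move=> /lt0r_neq0; rewrite /ctr_val /ctr1 /ctr2 /conic_eval /conic_form /conic_disc /= => disc0.
rewrite (expand_det_row _ 0) !big_ord_recl big_ord0 /cofactor !det_mx2 !mxE /= /bump /=.
by field.
Qed.

Lemma param_space_nonempty (R : realType) (h : conic R) :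
  0 < conic_disc h -> exists s, param_space h s.
Proof.
move=> /param_space_interior [y [r [r0 /(_ y)]]].
by case=> [i|x [Sx _]]; [rewrite subrr normr0 | exists x].
Qed.

Theorem theorem5p3 (R : realType) (H : R * R -> Prop) :
  hyperbola H ->
  (exists P : cone_param R * cone_param R, cone_pairs_over H P) /\
  (exists (S : ('I_4 -> R) -> Prop) (Phi : cone_param R * cone_param R -> 'I_4 -> R),
     semialgebraic S /\ sa_dim S 3 /\
     semialgebraic (restricted_graph (cone_pairs_over H) Phi) /\
     (forall P, cone_pairs_over H P -> S (Phi P)) /\
     (forall P Q, cone_pairs_over H P -> cone_pairs_over H Q ->
        (forall i, Phi P i = Phi Q i) -> P = Q) /\
     (forall s, S s -> exists P, cone_pairs_over H P /\ forall i, Phi P i = s i)).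
Proof.
move=> [a [b [c [d [e [f [disc [det HH]]]]]]]].
set h := Conic a b c d e f; have h_disc : 0 < conic_disc h := disc.
have h_ctr : ctr_val h != 0.
  by move: det; rewrite conic_det3 // !mulf_eq0 negb_or => /andP[].
split.
  have [s /(pair_coords_surj h_disc h_ctr HH) [P [DP _]]] := param_space_nonempty h_disc.
  by exists P.
exists (param_space h), (pair_coords h); split; first exact: param_space_semialgebraic.
split; first exact: param_space_dim.
split; first exact: pair_graph_semialgebraic.
split; first exact: pair_coords_mem.
split; first exact: pair_coords_inj.
exact: pair_coords_surj.
Qed.
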